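(* Let $P,Q$ be probability distributions on the same finite sample space with $S(P\|Q)\le c$. Then for all $r>1$ there exist probability distributions $P',P''$ on that sample space such that $\|P-P'\|_1\le \frac{2}{r}$ and $Q=\alpha P'+(1-\alpha)P''$, where $\alpha:=\frac{r-1}{r\,2^{r(c+1)}}$.
   Context: $S(P\|Q):=\sum_i P(i)\log_2\frac{P(i)}{Q(i)}$ is the relative entropy, and $\|P-P'\|_1:=\sum_i|P(i)-P'(i)|$ is the total variation distance. *)

From mathcomp Require Import all_boot all_order all_algebra.
From mathcomp Require Import all_classical all_reals all_analysis.
Set Implicit Arguments. Unset Strict Implicit. Unset Printing Implicit Defensive.
Import Order.TTheory GRing.Theory Num.Theory.
Local Open Scope ring_scope.

Definition is_distr (R : realType) (T : finType) (P : {ffun T -> R}) : Prop :=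
  (forall i, 0 <= P i) /\ \sum_(i : T) P i = 1.

Definition log2 (R : realType) (x : R) : R := ln x / ln 2.

(* Relative entropy S(P||Q) = sum_i P(i) log2 (P(i)/Q(i)), in the extended
   reals, with the standard conventions 0 log(0/q) = 0 and
   p log(p/0) = +oo for p > 0. *)
Definition rel_entropy (R : realType) (T : finType) (P Q : {ffun T -> R})
  : \bar R :=
  if [forall i, (Q i == 0) ==> (P i == 0)] then
    ((\sum_(i : T | P i != 0) P i * log2 (P i / Q i))%:E)%E
  else (+oo)%E.

Definition l1_dist (R : realType) (T : finType) (P P' : {ffun T -> R}) : R :=
  \sum_(i : T) `|P i - P' i|.

From mathcomp Require Import all_boot all_order all_algebra.
From mathcomp Require Import all_classical all_reals all_analysis.
From mathcomp Require Import lra ring.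
Set Implicit Arguments. Unset Strict Implicit. Unset Printing Implicit Defensive.
Import Order.TTheory GRing.Theory Num.Theory.
Local Open Scope ring_scope.

(* Let K = 2^(r(c+1)) and A = {i | P i <= K Q i}. Since p log2 (p/q) >= -q, a Markov
   bound on the log-likelihood ratio gives r (c+1) P(~A) <= S(P||Q) + 1 <= c + 1, so
   P(~A) <= 1/r. Take P' = P conditioned on A: then ||P - P'||_1 = 2 P(~A) <= 2/r and
   P' <= K Q / P(A) <= K Q r / (r-1), i.e. alpha P' <= Q, so that
   P'' = (Q - alpha P') / (1 - alpha) is again a distribution. *)

Section LogInequalities.
Variable R : realType.

Lemma ln_ge_1subV (x : R) : 0 < x -> 1 - x^-1 <= ln x.
Proof.
move=> x0; have xV0 : 0 < x^-1 by rewrite invr_gt0.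
have := @le_ln1Dx R (x^-1 - 1) ltac:(lra).
by rewrite (addrC 1) subrK lnV ?posrE //; lra.
Qed.

Lemma ln2_gt0 : 0 < ln (2 : R).
Proof. by rewrite ln_gt0 // ltr1n. Qed.

Lemma ln2_ge_half : 2^-1 <= ln (2 : R).
Proof. by have := @ln_ge_1subV 2 (ltr0Sn R 1); lra. Qed.

Lemma ln2_le1 : ln (2 : R) <= 1.
Proof. by have := @le_ln1Dx R 1 ltac:(lra). Qed.

Lemma le_log2E (t x : R) : 0 < x -> (t <= log2 x) = (2 `^ t <= x).
Proof.
move=> x0; rewrite /log2 ler_pdivlMr ?ln2_gt0 // -ln_powR.
by rewrite ler_ln ?posrE ?powR_gt0.
Qed.

Lemma subr_le_xlog2 (p q : R) : 0 < p -> 0 < q -> (p - q) / ln 2 <= p * log2 (p / q).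
Proof.
move=> p0 q0; rewrite /log2 mulrA ler_pM2r ?invr_gt0 ?ln2_gt0 //.
have := ln_ge_1subV (divr_gt0 p0 q0) => /(ler_wpM2l (ltW p0)).
by rewrite mulrBr mulr1 invf_div mulrCA divff ?mulr1 ?gt_eqF.
Qed.

(* From [ln (2 p / q) >= 1 - q / (2 p)], using [1/2 <= ln 2 <= 1]. *)
Lemma oppr_le_xlog2 (p q : R) : 0 < p -> 0 < q -> - q <= p * log2 (p / q).
Proof.
move=> p0 q0; have pq0 : 0 < p / q by rewrite divr_gt0.
have := ln_ge_1subV (mulr_gt0 (ltr0Sn R 1) pq0) => /(ler_wpM2l (ltW p0)).
rewrite lnM ?posrE // mulrBr mulr1.
have -> : p * (2 * (p / q))^-1 = q / 2 by field; rewrite !gt_eqF.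
rewrite /log2 mulrA ler_pdivlMr ?ln2_gt0 //.
have := ln2_ge_half; have := ln2_le1.
set a := ln (p / q); set l := ln (2 : R); rewrite -div1r; nra.
Qed.

End LogInequalities.

Definition rel_entropy_sum (R : realType) (T : finType) (P Q : {ffun T -> R}) : R :=
  \sum_(i | P i != 0) P i * log2 (P i / Q i).

Lemma rel_entropy_le_finite (R : realType) (T : finType) (P Q : {ffun T -> R}) (c : R) :
  (rel_entropy P Q <= c%:E)%E ->
  (forall i, Q i = 0 -> P i = 0) /\ rel_entropy_sum P Q <= c.
Proof.
rewrite /rel_entropy; case: ifP => [/forallP PQ | _]; last by rewrite leye_eq.
rewrite lee_fin; split => // i Qi; apply/eqP.
by move/implyP: (PQ i); apply; rewrite Qi.
Qed.

Lemma distr_mass_le1 (R : realType) (T : finType) (P : {ffun T -> R}) (A : pred T) :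
  is_distr P -> \sum_(i | A i) P i <= 1.
Proof.
move=> [P0 <-]; rewrite [leRHS](bigID A) /= lerDl.
by apply: sumr_ge0 => i _.
Qed.

Lemma distr_massC (R : realType) (T : finType) (P : {ffun T -> R}) (A : pred T) :
  is_distr P -> \sum_(i | ~~ A i) P i = 1 - \sum_(i | A i) P i.
Proof. by move=> [_ <-]; rewrite [\sum_i _](bigID A) /=; ring. Qed.

Section RelativeEntropy.
Variables (R : realType) (T : finType) (P Q : {ffun T -> R}).
Hypotheses (distrP : is_distr P) (distrQ : is_distr Q).
Hypothesis PQ : forall i, Q i = 0 -> P i = 0.

Lemma supp_gt0 i : P i != 0 -> 0 < P i /\ 0 < Q i.
Proof.
move=> Pi; split; first by rewrite lt0r Pi distrP.1.
by rewrite lt0r distrQ.1 andbT; apply: contra Pi => /eqP /PQ ->.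
Qed.

Lemma rel_entropy_sum_ge0 : 0 <= rel_entropy_sum P Q.
Proof.
have mass_supp : \sum_(i | P i != 0) P i = 1.
  rewrite -distrP.2 [RHS](bigID (fun i => P i != 0)) /= [X in _ + X]big1 ?addr0 //.
  by move=> i /negPn/eqP.
apply: le_trans (_ : \sum_(i | P i != 0) (P i - Q i) / ln 2 <= _).
  rewrite -mulr_suml sumrB mass_supp divr_ge0 ?subr_ge0 ?distr_mass_le1 //.
  exact/ltW/ln2_gt0.
by apply: ler_sum => i /supp_gt0 [p0 q0]; apply: subr_le_xlog2.
Qed.

(* Markov's inequality for the log-likelihood ratio: the terms [P i log2 (P i / Q i)]
   may be negative, but never below [- Q i]. *)
Lemma mass_tail_le (t : R) :
  t * (1 - \sum_(i | P i <= 2 `^ t * Q i) P i) <= rel_entropy_sum P Q + 1.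
Proof.
rewrite -distr_massC // (eq_bigl (fun i => 2 `^ t * Q i < P i)) => [|i]; last by rewrite -ltNge.
rewrite mulr_sumr; apply: (@le_trans _ _ (\sum_(i | P i != 0) (P i * log2 (P i / Q i) + Q i))).
  rewrite big_mkcond [leRHS]big_mkcond /=; apply: ler_sum => i _.
  case: ifPn => [tail | _].
    have Pi : P i != 0.
      by rewrite gt_eqF // (le_lt_trans _ tail) // mulr_ge0 ?powR_ge0 ?distrQ.1.
    have [p0 q0] := supp_gt0 Pi; rewrite Pi.
    have : t <= log2 (P i / Q i) by rewrite le_log2E ?divr_gt0 // ler_pdivlMr // ltW.
    move=> /(ler_wpM2l (ltW p0)); rewrite mulrC; have := distrQ.1 i; lra.
  case: ifPn => // /supp_gt0 [p0 q0]; have := oppr_le_xlog2 p0 q0; lra.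
by rewrite big_split /= lerD ?distr_mass_le1.
Qed.

End RelativeEntropy.

Section Conditioning.
Variables (R : realType) (T : finType) (P : {ffun T -> R}) (A : pred T).

Definition cond_distr : {ffun T -> R} :=
  [ffun i => if A i then P i / \sum_(j | A j) P j else 0].

Hypotheses (distrP : is_distr P) (mass_gt0 : 0 < \sum_(i | A i) P i).

Lemma cond_distr_mass : \sum_(i | A i) cond_distr i = 1.
Proof.
under eq_bigr => i Ai do rewrite ffunE Ai.
by rewrite -mulr_suml divff // gt_eqF.
Qed.

Lemma cond_distr_is_distr : is_distr cond_distr.
Proof.
split=> [i | ]; first by rewrite ffunE; case: ifP => // _; rewrite divr_ge0 ?distrP.1 ?ltW.
rewrite (bigID A) /= cond_distr_mass big1 ?addr0 // => i /negbTE Ai.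
by rewrite ffunE Ai.
Qed.

Lemma l1_dist_cond_distr : l1_dist P cond_distr = 2 * (1 - \sum_(i | A i) P i).
Proof.
set g := \sum_(i | A i) P i; have g1 : g <= 1 by apply: distr_mass_le1.
have onA : \sum_(i | A i) `|P i - cond_distr i| = 1 - g.
  rewrite -cond_distr_mass -sumrB; apply: eq_bigr => i Ai.
  by rewrite distrC ger0_norm // ffunE Ai subr_ge0 ler_pdivlMr // ler_piMr ?distrP.1.
have offA : \sum_(i | ~~ A i) `|P i - cond_distr i| = 1 - g.
  rewrite -distr_massC //; apply: eq_bigr => i /negbTE Ai.
  by rewrite ffunE Ai subr0 ger0_norm ?distrP.1.
by rewrite /l1_dist (bigID A) /= onA offA; ring.
Qed.

Lemma scale_cond_distr_le (Q : {ffun T -> R}) (K a : R) :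
  (forall i, 0 <= Q i) -> 0 <= a -> a * K <= \sum_(i | A i) P i ->
  (forall i, A i -> P i <= K * Q i) -> forall i, a * cond_distr i <= Q i.
Proof.
move=> Q0 a0 aK PKQ i; rewrite ffunE; case: ifPn => Ai; last by rewrite mulr0.
rewrite mulrA ler_pdivrMr // (le_trans (ler_wpM2l a0 (PKQ i Ai))) //.
by rewrite mulrA mulrC ler_wpM2l.
Qed.

End Conditioning.

Lemma distr_mixture_split (R : realType) (T : finType) (Q P' : {ffun T -> R}) (a : R) :
  is_distr Q -> is_distr P' -> a < 1 -> (forall i, a * P' i <= Q i) ->
  exists P'', is_distr P'' /\ forall i, Q i = a * P' i + (1 - a) * P'' i.
Proof.
move=> [_ Q1] [_ P'1] a1 aP'Q; have a1' : 1 - a != 0 by rewrite subr_eq0 gt_eqF.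
exists [ffun i => (Q i - a * P' i) / (1 - a)]; split; last first.
  by move=> i; rewrite ffunE mulrCA divff ?mulr1 // addrC subrK.
split=> [i | ]; first by rewrite ffunE divr_ge0 ?subr_ge0 ?aP'Q ?ltW.
under eq_bigr => i _ do rewrite ffunE.
by rewrite -mulr_suml sumrB -mulr_sumr Q1 P'1 mulr1 divff.
Qed.

Theorem mainTheorem3 (R : realType) (T : finType) (P Q : {ffun T -> R}) (c : R) :
  is_distr P -> is_distr Q -> (rel_entropy P Q <= c%:E)%E ->
  forall r : R, 1 < r ->
  exists P' P'' : {ffun T -> R},
    [/\ is_distr P', is_distr P'',
        l1_dist P P' <= 2 / r &
        let alpha := (r - 1) / (r * (2 `^ (r * (c + 1)))) in
        forall i, Q i = alpha * P' i + (1 - alpha) * P'' i].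
Proof.
move=> distrP distrQ /rel_entropy_le_finite [PQ S_le_c] r r1.
have c0 : 0 <= c := le_trans (rel_entropy_sum_ge0 distrP distrQ PQ) S_le_c.
set K := 2 `^ (r * (c + 1)).
have K1 : 1 <= K.
  by rewrite -[leLHS](powRr0 2); apply: ler_powR; rewrite ?ler1n // mulr_ge0 //; lra.
pose A := [pred i | P i <= K * Q i]; set g := \sum_(i | A i) P i.
have rg : r * (1 - g) <= 1.
  have := mass_tail_le distrP distrQ PQ (r * (c + 1)); rewrite -/K -/g => tail.
  rewrite -(ler_pM2l (_ : 0 < c + 1)); last by lra.
  by rewrite mulr1 mulrA (mulrC _ r); lra.
have g0 : 0 < g by nra.
set alpha := (r - 1) / (r * K).
have aK : alpha * K <= g.
  have -> : alpha * K = (r - 1) / r by rewrite /alpha; field; rewrite !gt_eqF //; lra.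
  by rewrite ler_pdivrMr; nra.
have a0 : 0 <= alpha by rewrite divr_ge0 ?mulr_ge0; lra.
have a1 : alpha < 1 by rewrite ltr_pdivrMr ?mulr_gt0; nra.
have distrP' := cond_distr_is_distr distrP g0.
have [P'' [distrP'' mixQ]] := distr_mixture_split distrQ distrP' a1
  (scale_cond_distr_le g0 distrQ.1 a0 aK (fun i Ai => Ai)).
exists (cond_distr P A), P''; split=> //.
by rewrite l1_dist_cond_distr // -/g ler_pdivlMr ?(lt_trans ltr01 r1) //; lra.
Qed.
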